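(* Let $(V_0,\dots,V_d)$ be a partition of $V$, $\mathbf x\in\mathbb R^V$, and $\Delta=(\Delta(0),\dots,\Delta(d))\in\mathbb R^{d+1}$. Let $\tilde{\mathbf x}$ be obtained from $\mathbf x$ by adding $\Delta(i)$ to the potential of every vertex in $V_i$. Then $$\mathcal B(\tilde{\mathbf x})-\mathcal B(\mathbf x)=\mathbf b_H^\top\Delta-\tfrac12\Delta^\top\mathbf L_H\Delta,$$ where $H$ is the contracted graph with vertices $V_0,\dots,V_d$ and resistances $r(V_k,V_l)=\big(\sum_{ij\in\delta(V_k,V_l)}\frac1{r(i,j)}\big)^{-1}$, $\mathbf L_H$ is the Laplacian of $H$, and $b_H(k)=b(V_k)-f(V_k)$ for $k=0,\dots,d$. In particular, the $\Delta$ maximizing $\mathcal B(\tilde{\mathbf x})-\mathcal B(\mathbf x)$ is given by a solution of $\mathbf L_H\Delta=\mathbf b_H$.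
   Context: $G=(V,E)$ is an undirected graph with resistances $r(e)>0$ and a fixed orientation $\vec E$; $\mathbf b\in\mathbb R^V$ with $\sum_ib(i)=0$. $\mathbf L=\sum_{ij\in E}\frac1{r(i,j)}(\mathbf e_i-\mathbf e_j)(\mathbf e_i-\mathbf e_j)^\top$ and $\mathcal B(\mathbf x)=\mathbf b^\top\mathbf x-\frac12\mathbf x^\top\mathbf L\mathbf x$. For $U\subset V$, $b(U)=\sum_{v\in U}b(v)$ and $f(U)=\sum_{ij\in E,\,i\in U,\,j\notin U}\frac{x(i)-x(j)}{r(i,j)}$ is the flow leaving $U$ in the potential-induced flow of $\mathbf x$; $\delta(V_k,V_l)$ is the set of edges with one endpoint in $V_k$ and the other in $V_l$. The Laplacian of a graph with resistances $r_H$ is $\sum_{kl}\frac1{r_H(k,l)}(\mathbf e_k-\mathbf e_l)(\mathbf e_k-\mathbf e_l)^\top$. *)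

(* Vertices V = 'I_n, edges E = 'I_m with a fixed orientation
   tl e -> hd e, resistances r : 'I_m -> R. Vectors in R^V are 'cV[R]_n. *)
From HB Require Import structures.
From mathcomp Require Import all_boot all_order all_algebra.
Set Implicit Arguments. Unset Strict Implicit. Unset Printing Implicit Defensive.
Import Order.TTheory GRing.Theory Num.Theory.
Local Open Scope ring_scope.

Section Defs.
Variable R : realFieldType.

Definition evec (n : nat) (i : 'I_n) : 'cV[R]_n := delta_mx i 0.

Definition laplacian (n m : nat) (tl hd : 'I_m -> 'I_n) (r : 'I_m -> R) : 'M[R]_n :=
  \sum_(e < m) (r e)^-1 *: ((evec (tl e) - evec (hd e)) *m (evec (tl e) - evec (hd e))^T).

Definition Bfun (n m : nat) (tl hd : 'I_m -> 'I_n) (r : 'I_m -> R) (b x : 'cV[R]_n) : R :=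
  (b^T *m x) 0 0 - 2^-1 * (x^T *m laplacian tl hd r *m x) 0 0.

Definition bset (n : nat) (b : 'cV[R]_n) (U : {set 'I_n}) : R := \sum_(v in U) b v 0.

(* f(U): flow leaving U in the potential-induced flow of x *)
Definition flow_out (n m : nat) (tl hd : 'I_m -> 'I_n) (r : 'I_m -> R)
  (x : 'cV[R]_n) (U : {set 'I_n}) : R :=
  \sum_(e < m)
    (if (tl e \in U) && (hd e \notin U) then (x (tl e) 0 - x (hd e) 0) / r e
     else if (hd e \in U) && (tl e \notin U) then (x (hd e) 0 - x (tl e) 0) / r e
     else 0).

Definition block (n d : nat) (part : 'I_n -> 'I_d.+1) (k : 'I_d.+1) : {set 'I_n} :=
  [set v | part v == k].

Definition cut_edge (n m d : nat) (tl hd : 'I_m -> 'I_n) (part : 'I_n -> 'I_d.+1)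
  (k l : 'I_d.+1) (e : 'I_m) : bool :=
  ((part (tl e) == k) && (part (hd e) == l)) || ((part (tl e) == l) && (part (hd e) == k)).

(* r_H(V_k,V_l) = (sum_{ij in delta(V_k,V_l)} 1/r(i,j))^-1  (with 0^-1 = 0 convention
   when the cut is empty, so that 1/r_H = 0, i.e. no edge in H) *)
Definition rH (n m d : nat) (tl hd : 'I_m -> 'I_n) (r : 'I_m -> R) (part : 'I_n -> 'I_d.+1)
  (k l : 'I_d.+1) : R :=
  (\sum_(e < m | cut_edge tl hd part k l e) (r e)^-1)^-1.

Definition laplacianH (n m d : nat) (tl hd : 'I_m -> 'I_n) (r : 'I_m -> R)
  (part : 'I_n -> 'I_d.+1) : 'M[R]_d.+1 :=
  \sum_(k < d.+1) \sum_(l < d.+1 | (k < l)%N)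
     (rH tl hd r part k l)^-1 *: ((evec k - evec l) *m (evec k - evec l)^T).

Definition bH (n m d : nat) (tl hd : 'I_m -> 'I_n) (r : 'I_m -> R)
  (part : 'I_n -> 'I_d.+1) (b x : 'cV[R]_n) : 'cV[R]_d.+1 :=
  \col_k (bset b (block part k) - flow_out tl hd r x (block part k)).

Definition shift (n d : nat) (part : 'I_n -> 'I_d.+1) (x : 'cV[R]_n) (D : 'cV[R]_d.+1)
  : 'cV[R]_n := x + \col_v D (part v) 0.

End Defs.

(* Let P be the 0/1 matrix of the partition, P v k = [part v = k].  Then the
   shifted potential is x + P D, and the Laplacian of H is P^T L P: it is the
   Laplacian of the multigraph obtained by sending both endpoints of each edge
   to their blocks, where edges inside a block become loops contributing
   nothing.  Since the flow out of U is 1_U^T L x, also b_H = P^T (b - L x).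
   Expanding the quadratic B along x + P D gives the identity, and as L_H is
   positive semidefinite every solution of L_H D = b_H maximises the gain. *)

From mathcomp Require Import all_boot all_order all_algebra.
From mathcomp Require Import ring lra.
Import Order.TTheory GRing.Theory Num.Theory.
Local Open Scope ring_scope.

Section Entries.
Variables (V : zmodType) (p q : nat).
Implicit Types A B : 'M[V]_(p, q).

Lemma addmxE A B i j : (A + B) i j = A i j + B i j.
Proof. by rewrite mxE. Qed.

Lemma oppmxE A i j : (- A) i j = - A i j.
Proof. by rewrite mxE. Qed.

Lemma submxE A B i j : (A - B) i j = A i j - B i j.
Proof. by rewrite addmxE oppmxE. Qed.

End Entries.

Section QuadraticForm.
Variables (R : realFieldType) (k : nat).
Implicit Types (M : 'M[R]_k) (a c u w x y D : 'cV[R]_k).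

Lemma form_tr M u w : (u^T *m M *m w) 0 0 = (w^T *m M^T *m u) 0 0.
Proof.
have -> : w^T *m M^T *m u = (u^T *m M *m w)^T by rewrite !trmx_mul trmxK mulmxA.
by rewrite [RHS]mxE.
Qed.

Lemma rank_one_form a u w :
  (u^T *m (a *m a^T) *m w) 0 0 = (u^T *m a) 0 0 * (a^T *m w) 0 0.
Proof. by rewrite mulmxA -mulmxA [LHS]mxE big_ord1. Qed.

Lemma mul_evec u i : (u^T *m evec R i) 0 0 = u i 0.
Proof. by rewrite /evec -colE !mxE. Qed.

Lemma tr_evec_mul u i : ((evec R i)^T *m u) 0 0 = u i 0.
Proof. by rewrite /evec trmx_delta -rowE mxE. Qed.

Lemma quad_shift M c x y : M^T = M ->
  (c^T *m (x + y)) 0 0 - 2^-1 * ((x + y)^T *m M *m (x + y)) 0 0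
    - ((c^T *m x) 0 0 - 2^-1 * (x^T *m M *m x) 0 0)
  = ((c - M *m x)^T *m y) 0 0 - 2^-1 * (y^T *m M *m y) 0 0.
Proof.
move=> M_sym.
have form_yx : (y^T *m M *m x) 0 0 = (x^T *m M *m y) 0 0 by rewrite form_tr M_sym.
have tr_Mx : (M *m x)^T = x^T *m M by rewrite trmx_mul M_sym.
rewrite [(x + y)^T]linearD [(c - _)^T]linearB /= !mulmxDl !mulmxDr mulNmx.
rewrite !addmxE oppmxE form_yx tr_Mx; lra.
Qed.

Lemma quad_max M c (D0 : 'cV[R]_k) D : M^T = M -> (forall y, 0 <= (y^T *m M *m y) 0 0) ->
  M *m D0 = c ->
  (c^T *m D) 0 0 - 2^-1 * (D^T *m M *m D) 0 0
  <= (c^T *m D0) 0 0 - 2^-1 * (D0^T *m M *m D0) 0 0.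
Proof.
move=> M_sym M_psd D0_crit.
have := quad_shift _ c D0 (D - D0) M_sym.
rewrite subrKC D0_crit subrr trmx0 mul0mx [(0 : 'M_1) 0 0]mxE.
have := M_psd (D - D0); lra.
Qed.

End QuadraticForm.

Section Laplacian.
Variables (R : realFieldType) (n m : nat) (tl hd : 'I_m -> 'I_n) (r : 'I_m -> R).

Lemma laplacian_form (u w : 'cV[R]_n) :
  (u^T *m laplacian tl hd r *m w) 0 0
  = \sum_(e < m) (r e)^-1 * ((u (tl e) 0 - u (hd e) 0) * (w (tl e) 0 - w (hd e) 0)).
Proof.
rewrite /laplacian mulmx_sumr mulmx_suml summxE; apply: eq_bigr => e _.
rewrite -scalemxAr -scalemxAl mxE rank_one_form [(_ - _)^T]linearB /= mulmxBr mulmxBl.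
by rewrite !submxE !mul_evec !tr_evec_mul.
Qed.

Lemma laplacian_tr : (laplacian tl hd r)^T = laplacian tl hd r.
Proof.
rewrite /laplacian linear_sum; apply: eq_bigr => e _.
by rewrite linearZ /= trmx_mul trmxK.
Qed.

Lemma laplacian_form_ge0 : (forall e, 0 < r e) ->
  forall u : 'cV[R]_n, 0 <= (u^T *m laplacian tl hd r *m u) 0 0.
Proof.
move=> r_pos u; rewrite laplacian_form; apply: sumr_ge0 => e _.
by rewrite mulr_ge0 ?invr_ge0 ?(ltW (r_pos e)) -?expr2 ?sqr_ge0.
Qed.

Lemma flow_out_laplacian (x : 'cV[R]_n) (U : {set 'I_n}) :
  flow_out tl hd r x U = \sum_(v in U) (laplacian tl hd r *m x) v 0.
Proof.
have -> : \sum_(v in U) (laplacian tl hd r *m x) v 0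
          = ((\col_v (v \in U)%:R)^T *m laplacian tl hd r *m x) 0 0.
  rewrite -mulmxA [RHS]mxE big_mkcond; apply: eq_bigr => v _.
  by rewrite !mxE; case: (v \in U); rewrite ?mul1r ?mul0r.
rewrite laplacian_form /flow_out; apply: eq_bigr => e _; rewrite !mxE.
by case: (tl e \in U); case: (hd e \in U) => /=; ring.
Qed.

End Laplacian.

Lemma sum_unordered_pair (V : nmodType) (p : nat) (a c : 'I_p) (g : 'I_p -> 'I_p -> V) :
  (forall k l, g k l = g l k) -> g a a = 0 ->
  \sum_(k < p) \sum_(l < p | (k < l)%N && ((a == k) && (c == l) || (a == l) && (c == k)))
    g k l = g a c.
Proof.
move=> g_sym g_aa; rewrite pair_big_dep /=.
have [lt_ac|lt_ca|/val_inj eq_ac] := ltngtP a c.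
- rewrite (big_pred1 (a, c)) // => -[k l] /=; rewrite xpair_eqE.
  apply/idP/idP => [/andP[lt_kl /orP[]] /andP[/eqP a_eq /eqP c_eq]|/andP[/eqP-> /eqP->]].
  + by rewrite -a_eq -c_eq !eqxx.
  + by move: lt_kl; rewrite -a_eq -c_eq ltnNge (ltnW lt_ac).
  + by rewrite lt_ac !eqxx.
- rewrite (big_pred1 (c, a)) ?(g_sym c a) // => -[k l] /=; rewrite xpair_eqE.
  apply/idP/idP => [/andP[lt_kl /orP[]] /andP[/eqP a_eq /eqP c_eq]|/andP[/eqP-> /eqP->]].
  + by move: lt_kl; rewrite -a_eq -c_eq ltnNge (ltnW lt_ca).
  + by rewrite -a_eq -c_eq !eqxx.
  + by rewrite lt_ca !eqxx orbT.
- rewrite -eq_ac g_aa big_pred0 // => -[k l] /=.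
  by apply/negP => /andP[lt_kl /orP[] /andP[/eqP a_eq /eqP a_eq']];
    move: lt_kl; rewrite -a_eq -a_eq' ltnn.
Qed.

Section Contraction.
Variables (R : realFieldType) (n m d : nat) (tl hd : 'I_m -> 'I_n) (r : 'I_m -> R).
Variable part : 'I_n -> 'I_d.+1.

Definition partition_mx : 'M[R]_(n, d.+1) := \matrix_(v, k) (part v == k)%:R.

Lemma partition_mx_mul (D : 'cV[R]_d.+1) v : (partition_mx *m D) v 0 = D (part v) 0.
Proof.
rewrite mxE (bigD1 (part v)) //= big1 => [|k /negbTE k_neq].
  by rewrite !mxE eqxx mul1r addr0.
by rewrite !mxE eq_sym k_neq mul0r.
Qed.

Lemma tr_partition_mx_evec v : partition_mx^T *m evec R v = evec R (part v).
Proof. by apply/colP => k; rewrite /evec -colE !mxE eqxx andbT eq_sym. Qed.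

Lemma tr_partition_mx_mul (y : 'cV[R]_n) k :
  (partition_mx^T *m y) k 0 = \sum_(v in block part k) y v 0.
Proof.
rewrite mxE [RHS]big_mkcond; apply: eq_bigr => v _.
by rewrite !mxE in_set; case: (part v == k); rewrite ?mul1r ?mul0r.
Qed.

Lemma shift_partition_mx (x : 'cV[R]_n) D : shift part x D = x + partition_mx *m D.
Proof. by congr (_ + _); apply/colP => v; rewrite partition_mx_mul mxE. Qed.

Lemma laplacian_contract :
  laplacian (part \o tl) (part \o hd) r
  = partition_mx^T *m laplacian tl hd r *m partition_mx.
Proof.
rewrite /laplacian mulmx_sumr mulmx_suml; apply: eq_bigr => e _.
rewrite -scalemxAr -scalemxAl; congr (_ *: _).
have P_edge : partition_mx^T *m (evec R (tl e) - evec R (hd e))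
              = evec R (part (tl e)) - evec R (part (hd e)).
  by rewrite mulmxBr !tr_partition_mx_evec.
by rewrite /= -P_edge trmx_mul trmxK !mulmxA.
Qed.

Lemma laplacianH_contract :
  laplacianH tl hd r part = laplacian (part \o tl) (part \o hd) r.
Proof.
rewrite /laplacianH /rH /laplacian /cut_edge.
under eq_bigr => k _ do under eq_bigr => l _ do rewrite invrK scaler_suml.
under eq_bigr => k _ do rewrite (exchange_big_dep xpredT) //=.
rewrite exchange_big /=; apply: eq_bigr => e _.
under eq_bigr => k _ do rewrite -scaler_sumr.
rewrite -scaler_sumr sum_unordered_pair // => [k l|].
  by rewrite -[evec R l - _]opprB linearN /= mulNmx mulmxN opprK.
by rewrite subrr mul0mx.
Qed.

Lemma bH_partition (b x : 'cV[R]_n) :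
  bH tl hd r part b x = partition_mx^T *m (b - laplacian tl hd r *m x).
Proof.
apply/colP => k; rewrite /bH mxE mulmxBr submxE !tr_partition_mx_mul.
by rewrite flow_out_laplacian.
Qed.

Lemma Bfun_shift (b x : 'cV[R]_n) D :
  Bfun tl hd r b (shift part x D) - Bfun tl hd r b x
  = ((bH tl hd r part b x)^T *m D) 0 0
    - 2^-1 * (D^T *m laplacianH tl hd r part *m D) 0 0.
Proof.
rewrite /Bfun shift_partition_mx quad_shift ?laplacian_tr //.
rewrite bH_partition laplacianH_contract laplacian_contract.
by rewrite !trmx_mul trmxK !mulmxA.
Qed.

End Contraction.

Theorem mainTheorem8 (R : realFieldType) (n m d : nat)
  (tl hd : 'I_m -> 'I_n) (r : 'I_m -> R) (b : 'cV[R]_n)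
  (part : 'I_n -> 'I_d.+1) (x : 'cV[R]_n) :
  (forall e, tl e != hd e) ->
  (forall e, 0 < r e) ->
  \sum_(v < n) b v 0 = 0 ->
  (forall k : 'I_d.+1, exists v, part v = k) ->
  (forall D : 'cV[R]_d.+1,
     Bfun tl hd r b (shift part x D) - Bfun tl hd r b x
     = ((bH tl hd r part b x)^T *m D) 0 0
       - 2^-1 * (D^T *m laplacianH tl hd r part *m D) 0 0)
  /\
  (forall D0 : 'cV[R]_d.+1,
     laplacianH tl hd r part *m D0 = bH tl hd r part b x ->
     forall D : 'cV[R]_d.+1,
       Bfun tl hd r b (shift part x D) - Bfun tl hd r b x
       <= Bfun tl hd r b (shift part x D0) - Bfun tl hd r b x).
Proof.
move=> _ r_pos _ _; split=> [|D0 D0_crit D]; first exact: Bfun_shift.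
rewrite !Bfun_shift; apply: quad_max D0_crit.
- by rewrite laplacianH_contract laplacian_tr.
- by move=> y; rewrite laplacianH_contract laplacian_form_ge0.
Qed.
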